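(* Let $k\ge1$, $s>0$, and let $R\subseteq R'$ be rectangles in $\mathbb{Z}^2$ with dimensions $(a,b)$ and $(a+\ell,b+m)$ respectively, $a,b\ge1$, $\ell,m\ge0$. Then \[ \mathbf{P}\big(D(R,R')\big)\le\exp\!\Big(-(m-2(k-1))\,g_k(as)-(\ell-2(k-1))\,g_k(bs)+\ell m\, s\,\exp\!\big(k\,(g_k(as)+g_k(bs))\big)\Big). \]
   Context: Let $q=e^{-s}$; each site of $\mathbb{Z}^2$ is independently nonempty with probability $1-q$ and empty with probability $q$. A rectangle $\{x_0,\dots,x_0+a-1\}\times\{y_0,\dots,y_0+b-1\}$ has dimensions $(a,b)$. For $R\subseteq R'$, let the left strip $L$ (resp. right strip $L'$) be the set of sites of $R'$ lying in columns strictly to the left (resp. right) of all columns of $R$, and the bottom strip $T$ (resp. top strip $T'$) the set of sites of $R'$ in rows strictly below (resp. above) all rows of $R$; these strips extend over the full height (resp. width) of $R'$, so the left and right strips together have $\ell$ columns and the top and bottom strips together have $m$ rows. $D(R,R')$ is the event that neither $L$ nor $L'$ contains $k$ consecutive columns all of whose sites are empty, and neither $T$ nor $T'$ contains $k$ consecutive rows all of whose sites are empty. Here $g_k(z)=-\log f_k(e^{-z})$, where $f_k:[0,1]\to[0,1]$ is the unique decreasing function with $f_k(x)^k-f_k(x)^{k+1}=x^k-x^{k+1}$. *)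

From Stdlib Require Import Reals ZArith List.
Import ListNotations.
Open Scope R_scope.

(* A configuration: w (x,y) = true iff site (x,y) is EMPTY. *)
Definition config := (Z * Z)%type -> bool.

Definition zrange (x : Z) (n : nat) : list Z :=
  map (fun i => (x + Z.of_nat i)%Z) (seq 0 n).

Definition zint (lo hi : Z) : list Z := zrange lo (Z.to_nat (hi - lo)).

Definition upd (w : config) (p : Z * Z) (v : bool) : config :=
  fun p' => if (Z.eqb (fst p') (fst p) && Z.eqb (snd p') (snd p))%bool then v else w p'.

(* Expectation of the indicator of a boolean event under the product measure
   on the listed sites: each site empty with probability q, nonempty with 1-q
   (sites outside the list keep their value in w). *)
Fixpoint probL (q : R) (sites : list (Z * Z)) (E : config -> bool) (w : config) : R :=
  match sites with
  | nil => if E w then 1 else 0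
  | p :: rest => q * probL q rest E (upd w p true)
                 + (1 - q) * probL q rest E (upd w p false)
  end.

Definition col_empty (w : config) (ys : list Z) (c : Z) : bool :=
  forallb (fun y => w (c, y)) ys.
Definition row_empty (w : config) (xs : list Z) (r : Z) : bool :=
  forallb (fun x => w (x, r)) xs.

Definition kconsec (k : nat) (empty : Z -> bool) (lo hi : Z) : bool :=
  existsb (fun c => (Z.leb (c + Z.of_nat k) hi) &&
                    forallb (fun j => empty (c + j)%Z) (zrange 0 k))%bool
          (zint lo hi).

(* R = {x0..x0+a-1} x {y0..y0+b-1},  R' = {x1..x1+a+l-1} x {y1..y1+b+m-1}.
   D(R,R'): no strip (left, right, bottom, top) contains k consecutive
   fully empty columns/rows; strips extend over the full height/width of R'. *)
Definition D_event (k : nat) (x0 y0 x1 y1 : Z) (a b l m : nat) (w : config) : bool :=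
  let xsR' := zrange x1 (a + l) in
  let ysR' := zrange y1 (b + m) in
  negb (kconsec k (col_empty w ysR') x1 x0) &&
  negb (kconsec k (col_empty w ysR') (x0 + Z.of_nat a) (x1 + Z.of_nat (a + l))) &&
  negb (kconsec k (row_empty w xsR') y1 y0) &&
  negb (kconsec k (row_empty w xsR') (y0 + Z.of_nat b) (y1 + Z.of_nat (b + m))).

Definition sites_of (x1 y1 : Z) (a b l m : nat) : list (Z * Z) :=
  list_prod (zrange x1 (a + l)) (zrange y1 (b + m)).

Definition probD (s : R) (k : nat) (x0 y0 x1 y1 : Z) (a b l m : nat) : R :=
  probL (exp (- s)) (sites_of x1 y1 a b l m) (D_event k x0 y0 x1 y1 a b l m)
        (fun _ => false).

Definition is_fk (k : nat) (f : R -> R) : Prop :=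
  (forall x, 0 <= x <= 1 -> 0 <= f x <= 1) /\
  (forall x y, 0 <= x <= 1 -> 0 <= y <= 1 -> x < y -> f y < f x) /\
  (forall x, 0 <= x <= 1 -> f x ^ k - f x ^ (k + 1) = x ^ k - x ^ (k + 1)).

Definition gk (f : R -> R) (z : R) : R := - ln (f (exp (- z))).

(* Condition on the four corner blocks of R' \ R, i.e. the sites lying both in a left/right
   strip and in a bottom/top strip.  Given the corners, a column of the left strip can be
   entirely empty only if its corner part is; its remaining b sites are then all empty with
   probability p = q^b, independently over columns and of the other three strips.  So the
   conditional probability that the left strip has no k consecutive empty columns is the
   probability of no run of k successes in Bernoulli(p) trials, where columns with a nonempty
   corner part act as barriers.  A renewal argument bounds it by f^(n - (k-1) - k c), with
   f = f_k(p), n the number of columns and c the number of barriers; the identity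
   f^k - f^(k+1) = p^k - p^(k+1) is exactly what makes this bound propagate through a block
   of k trials.  A nonempty corner site creates at most one column barrier and one row barrier,
   so the product of the four strip bounds is exp(-(m-2(k-1)) g_k(as) - (l-2(k-1)) g_k(bs))
   times a factor exp(k (g_k(as) + g_k(bs))) per nonempty corner site.  Averaging over the
   l m independent corner sites and using 1 - e^(-s) <= s gives the bound. *)

From Stdlib Require Import Reals ZArith List Lra Lia Permutation FunctionalExtensionality.
Open Scope R_scope.
Open Scope bool_scope.

(** * Expectations under the product measure *)

Fixpoint expect (q : R) (sites : list (Z * Z)) (X : config -> R) (w : config) : R :=
  match sites with
  | nil => X w
  | p :: rest => q * expect q rest X (upd w p true) + (1 - q) * expect q rest X (upd w p false)
  end.

Definition indicator (b : bool) : R := if b then 1 else 0.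

Lemma indicator_andb b c : indicator (b && c) = indicator b * indicator c.
Proof. destruct b, c; cbn; ring. Qed.

Lemma probL_expect q s E w : probL q s E w = expect q s (fun w => indicator (E w)) w.
Proof. revert w; induction s; intro w; cbn; rewrite ?IHs; reflexivity. Qed.

Lemma expect_app q s1 s2 X w :
  expect q (s1 ++ s2) X w = expect q s1 (expect q s2 X) w.
Proof. revert w; induction s1; intro w; cbn; rewrite ?IHs1; reflexivity. Qed.

Lemma expect_ext q s X Y w : (forall w, X w = Y w) -> expect q s X w = expect q s Y w.
Proof. intro H; revert w; induction s; intro w; cbn; rewrite ?IHs; auto. Qed.

Lemma expect_le q s X Y w :
  0 <= q <= 1 -> (forall w, X w <= Y w) -> expect q s X w <= expect q s Y w.
Proof.
  intros Hq H; revert w; induction s; intro w; cbn; auto.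
  apply Rplus_le_compat; apply Rmult_le_compat_l; auto; lra.
Qed.

Definition site_eq_dec (p p' : Z * Z) : {p = p'} + {p <> p'}.
Proof. decide equality; apply Z.eq_dec. Defined.

Lemma upd_eq w p v : upd w p v p = v.
Proof. unfold upd; now rewrite !Z.eqb_refl. Qed.

Lemma upd_neq w p v p' : p' <> p -> upd w p v p' = w p'.
Proof.
  destruct p as [x y], p' as [x' y']; unfold upd; cbn; intro H.
  destruct (Z.eqb_spec x' x), (Z.eqb_spec y' y); cbn; congruence.
Qed.

Lemma upd_comm w p v p' v' : p <> p' -> upd (upd w p v) p' v' = upd (upd w p' v') p v.
Proof.
  intro H; apply functional_extensionality; intro x.
  destruct (site_eq_dec x p') as [->|Hx'].
  - now rewrite upd_eq, upd_neq, upd_eq.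
  - rewrite (upd_neq _ _ _ _ Hx').
    destruct (site_eq_dec x p) as [->|Hx]; [now rewrite !upd_eq|].
    now rewrite !upd_neq.
Qed.

Lemma expect_perm q s s' X w : Permutation s s' -> expect q s X w = expect q s' X w.
Proof.
  intro HP; revert w; induction HP; intro w; cbn; rewrite ?IHHP; auto.
  - destruct (site_eq_dec x y) as [->|Hxy]; [ring|].
    rewrite !(upd_comm _ y _ x) by auto; ring.
  - now rewrite IHHP1, IHHP2.
Qed.

Definition ignores {A} (F : config -> A) (s : list (Z * Z)) : Prop :=
  forall w p v, In p s -> F (upd w p v) = F w.

Definition depends_only {A} (F : config -> A) (P : Z * Z -> Prop) : Prop :=
  forall w w', (forall p, P p -> w p = w' p) -> F w = F w'.

Lemma ignores_cons {A} (F : config -> A) p s : ignores F (p :: s) -> ignores F s.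
Proof. intros H w p' v Hp'; apply H; now right. Qed.

Lemma ignores_of_depends_only {A} (F : config -> A) P s :
  depends_only F P -> (forall p, In p s -> ~ P p) -> ignores F s.
Proof.
  intros H Hs w p v Hp; apply H; intros p' Hp'.
  apply upd_neq; intros ->; exact (Hs p Hp Hp').
Qed.

Lemma ignores_comp {A B} (G : config -> A) (F : A -> B) s :
  ignores G s -> ignores (fun w => F (G w)) s.
Proof. intros H w p v Hp; now rewrite H. Qed.

Lemma ignores_mul (F G : config -> R) s :
  ignores F s -> ignores G s -> ignores (fun w => F w * G w) s.
Proof. intros HF HG w p v Hp; now rewrite HF, HG. Qed.

Lemma expect_ignored q s X w : ignores X s -> expect q s X w = X w.
Proof.
  revert w; induction s; intros w H; cbn; auto.
  rewrite !IHs by (eapply ignores_cons; eauto); rewrite !H by (now left); ring.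
Qed.

Lemma expect_mull q s A B w :
  ignores A s -> expect q s (fun w => A w * B w) w = A w * expect q s B w.
Proof.
  revert w; induction s; intros w H; cbn; auto.
  rewrite !IHs by (eapply ignores_cons; eauto); rewrite !H by (now left); ring.
Qed.

Lemma expect_if q s (c : config -> bool) A B w : ignores c s ->
  expect q s (fun w => if c w then A w else B w) w =
  if c w then expect q s A w else expect q s B w.
Proof.
  revert w; induction s; intros w H; cbn; auto.
  rewrite !IHs by (eapply ignores_cons; eauto); rewrite !H by now left.
  now destruct (c w).
Qed.

Lemma expect_all_empty q s A B w : NoDup s -> ignores A s -> ignores B s ->
  expect q s (fun w => if forallb w s then A w else B w) w =
  q ^ length s * A w + (1 - q ^ length s) * B w.
Proof.
  revert w; induction s as [|p s IH]; intros w Hnd HA HB; cbn; [ring|].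
  inversion Hnd as [|? ? Hp Hs]; subst.
  assert (Hstep : forall v, expect q s (fun w => if w p && forallb w s then A w else B w) (upd w p v)
            = if v then q ^ length s * A w + (1 - q ^ length s) * B w else B w).
  { intro v.
    rewrite (expect_ext q s _ (fun w' => if w' p then (if forallb w' s then A w' else B w') else B w'))
      by (intro; now destruct (_ p)).
    rewrite expect_if, upd_eq.
    2: { intros w' p' v' Hp'; apply upd_neq; intros ->; contradiction. }
    destruct v.
    - rewrite IH by (auto; eapply ignores_cons; eauto); now rewrite !HA, !HB by now left.
    - rewrite expect_ignored by (eapply ignores_cons; eauto); now rewrite HB by now left. }
  rewrite !Hstep; ring.
Qed.

Definition nonempty_count (l : list bool) : nat := count_occ Bool.bool_dec l false.

Lemma expect_exp_nonempty_count q s c w : NoDup s ->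
  expect q s (fun w => exp (INR (nonempty_count (map w s)) * c)) w =
  (q + (1 - q) * exp c) ^ length s.
Proof.
  revert w; induction s as [|p s IH]; intros w Hnd; cbn.
  - now rewrite Rmult_0_l, exp_0.
  - inversion Hnd as [|? ? Hp Hs]; subst.
    assert (Hstep : forall v,
      expect q s (fun w => exp (INR (count_occ Bool.bool_dec (w p :: map w s) false) * c)) (upd w p v)
      = (if v then 1 else exp c) * (q + (1 - q) * exp c) ^ length s).
    { intro v.
      rewrite (expect_ext q s _
        (fun w => (if w p then 1 else exp c) * exp (INR (nonempty_count (map w s)) * c))).
      2: { intro w'; cbn -[INR]; unfold nonempty_count.
           destruct (w' p); cbn -[INR]; [ring|].
           rewrite S_INR, Rmult_plus_distr_r, Rmult_1_l, exp_plus; ring. }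
      rewrite expect_mull, IH, upd_eq; auto.
      intros w' p' v' Hp'; rewrite upd_neq; auto; intros ->; contradiction. }
    rewrite !Hstep; ring.
Qed.

(** * Runs of empty lines *)

Lemma zrange_S x n : zrange x (S n) = x :: zrange (x + 1) n.
Proof.
  unfold zrange; cbn; rewrite Z.add_0_r, <- seq_shift, map_map; f_equal.
  apply map_ext; intro; lia.
Qed.

Lemma zrange_app x n m : zrange x (n + m) = zrange x n ++ zrange (x + Z.of_nat n) m.
Proof.
  revert x; induction n; intro x; [now rewrite Z.add_0_r|].
  change (S n + m)%nat with (S (n + m)); rewrite !zrange_S, IHn; cbn; do 3 f_equal; lia.
Qed.

Lemma in_zrange z x n : In z (zrange x n) <-> (x <= z < x + Z.of_nat n)%Z.
Proof.
  unfold zrange; rewrite in_map_iff; split.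
  - intros [i [<- Hi]]; apply in_seq in Hi; lia.
  - intro H; exists (Z.to_nat (z - x)); split; [lia|]; apply in_seq; lia.
Qed.

Lemma length_zrange x n : length (zrange x n) = n.
Proof. unfold zrange; now rewrite length_map, length_seq. Qed.

Lemma NoDup_zrange x n : NoDup (zrange x n).
Proof. apply FinFun.Injective_map_NoDup_in; [intros; lia | apply seq_NoDup]. Qed.

(* [r] is the length of the run of [true]s immediately before [fl]. *)
Fixpoint no_run (k r : nat) (fl : list bool) : bool :=
  match fl with
  | nil => true
  | true :: cs => if (S r <? k)%nat then no_run k (S r) cs else false
  | false :: cs => no_run k 0 cs
  end.

Section Kconsec.
Variables (k : nat) (e : Z -> bool).

Definition all_from (lo : Z) (t : nat) : bool := forallb e (zrange lo t).

Lemma all_from_window lo t : forallb (fun j => e (lo + j)%Z) (zrange 0 t) = all_from lo t.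
Proof.
  unfold all_from, zrange; induction (seq 0 t) as [|i l IH]; cbn; auto.
  now rewrite <- IH.
Qed.

Lemma all_from_S lo t : all_from lo (S t) = e lo && all_from (lo + 1) t.
Proof. unfold all_from; now rewrite zrange_S. Qed.

Lemma all_from_le lo t t' : (t' <= t)%nat -> all_from lo t = true -> all_from lo t' = true.
Proof.
  unfold all_from; rewrite !forallb_forall; intros Ht H x Hx.
  apply H; rewrite in_zrange in *; lia.
Qed.

Lemma kconsec_refl lo : kconsec k e lo lo = false.
Proof. unfold kconsec, zint; now rewrite Z.sub_diag. Qed.

Lemma kconsec_cons lo hi : (lo < hi)%Z ->
  kconsec k e lo hi = ((lo + Z.of_nat k <=? hi)%Z && all_from lo k) || kconsec k e (lo + 1) hi.
Proof.
  intro H; unfold kconsec, zint.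
  replace (Z.to_nat (hi - lo)) with (S (Z.to_nat (hi - (lo + 1)))) by lia.
  now rewrite zrange_S; cbn; rewrite all_from_window.
Qed.

Hypothesis Hk : (1 <= k)%nat.

(* The first [k - r] lines are empty, completing a run of [r] begun before [lo]. *)
Let initial_run (r : nat) (lo : Z) (n : nat) : bool := (k - r <=? n)%nat && all_from lo (k - r).

Lemma initial_run_kconsec lo n :
  initial_run 0 lo n = true -> kconsec k e lo (lo + Z.of_nat n) = true.
Proof.
  unfold initial_run; rewrite Nat.sub_0_r, Bool.andb_true_iff, Nat.leb_le; intros [Hn Hall].
  rewrite kconsec_cons, Hall by lia; cbn.
  replace (lo + Z.of_nat k <=? lo + Z.of_nat n)%Z with true by (symmetry; apply Z.leb_le; lia).
  reflexivity.
Qed.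

Lemma no_run_kconsec n : forall lo r, (r < k)%nat ->
  no_run k r (map e (zrange lo n)) =
  negb (initial_run r lo n || kconsec k e lo (lo + Z.of_nat n)).
Proof.
  induction n as [|n IH]; intros lo r Hr.
  - unfold initial_run; cbn [Z.of_nat]; rewrite Z.add_0_r, kconsec_refl.
    now replace (k - r <=? 0)%nat with false by (symmetry; apply Nat.leb_gt; lia).
  - rewrite zrange_S, kconsec_cons by lia; cbn [map].
    replace (lo + Z.of_nat (S n))%Z with (lo + 1 + Z.of_nat n)%Z by lia.
    unfold initial_run at 1; replace (k - r)%nat with (S (k - S r)) by lia.
    rewrite !all_from_S; destruct (e lo) eqn:Elo; cbn [no_run andb].
    + destruct (Nat.ltb_spec (S r) k) as [Hsr|Hsr].
      * (* a window at [lo] contains the initial run, so it adds nothing *)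
        rewrite IH by exact Hsr; unfold initial_run.
        destruct (S (k - S r) <=? S n)%nat eqn:Hle; cbn.
        -- change (k - S r <=? n)%nat with (S (k - S r) <=? S n)%nat; rewrite Hle.
           destruct (all_from (lo + 1) (k - S r)) eqn:Hall; [reflexivity|].
           replace (all_from lo k) with false; [now rewrite !Bool.andb_false_r|].
           symmetry; apply Bool.not_true_iff_false; intro Hwin.
           replace k with (S (k - 1)) in Hwin by lia.
           rewrite all_from_S in Hwin; apply andb_prop in Hwin as [_ Hwin].
           now rewrite (all_from_le (lo + 1) (k - 1) (k - S r) ltac:(lia) Hwin) in Hall.
        -- change (k - S r <=? n)%nat with (S (k - S r) <=? S n)%nat; rewrite Hle.
           replace (lo + Z.of_nat k <=? lo + 1 + Z.of_nat n)%Z with false; [easy|].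
           symmetry; apply Z.leb_gt; apply Nat.leb_gt in Hle; lia.
      * replace (k - S r)%nat with 0%nat by lia; cbn.
        now replace (1 <=? S n)%nat with true by (symmetry; apply Nat.leb_le; lia).
    + rewrite IH by lia.
      replace (all_from lo k) with false
        by (replace k with (S (k - 1)) by lia; now rewrite all_from_S, Elo).
      rewrite !Bool.andb_false_r; cbn.
      destruct (initial_run 0 (lo + 1) n) eqn:Hrun; [|reflexivity].
      now rewrite initial_run_kconsec.
Qed.

Lemma kconsec_no_run lo n :
  negb (kconsec k e lo (lo + Z.of_nat n)) = no_run k 0 (map e (zrange lo n)).
Proof.
  rewrite no_run_kconsec by lia; f_equal.
  destruct (initial_run 0 lo n) eqn:Hrun; [|reflexivity].
  now rewrite initial_run_kconsec.
Qed.

End Kconsec.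

(** * Probability of no run and its exponential bound *)

Lemma exp_le x y : x <= y -> exp x <= exp y.
Proof. intros [H | ->]; [left; now apply exp_increasing | right; reflexivity]. Qed.

Lemma exp_mul_nonpos_le t u c : c <= 0 -> u <= t -> exp (t * c) <= exp (u * c).
Proof. intros; apply exp_le; nra. Qed.

(* [fl] lists the lines of a strip: a line flagged [true] is entirely empty with probability [p],
   independently of the others; a line flagged [false] certainly contains a nonempty site. *)
Fixpoint no_run_prob (k : nat) (p : R) (r : nat) (fl : list bool) : R :=
  match fl with
  | nil => 1
  | true :: cs => p * (if (S r <? k)%nat then no_run_prob k p (S r) cs else 0)
                  + (1 - p) * no_run_prob k p 0 cs
  | false :: cs => no_run_prob k p 0 cs
  end.

Lemma no_run_prob_nonneg k p r fl : 0 <= p <= 1 -> 0 <= no_run_prob k p r fl.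
Proof.
  intro Hp; revert r; induction fl as [|[] cs IH]; intro r; cbn [no_run_prob]; [lra| |auto].
  apply Rplus_le_le_0_compat; apply Rmult_le_pos; try lra; auto.
  destruct (S r <? k)%nat; [auto | lra].
Qed.

Lemma no_run_prob_trues_false k p r j rest : (r + j < k)%nat ->
  no_run_prob k p r (repeat true j ++ false :: rest) = no_run_prob k p 0 rest.
Proof.
  revert r; induction j as [|j IH]; intros r Hr; cbn [repeat app no_run_prob]; auto.
  replace (S r <? k)%nat with true by (symmetry; apply Nat.ltb_lt; lia).
  rewrite !IH by lia; ring.
Qed.

Lemma no_run_prob_trues k p r j : (r + j < k)%nat -> no_run_prob k p r (repeat true j) = 1.
Proof.
  revert r; induction j as [|j IH]; intros r Hr; cbn [repeat app no_run_prob]; auto.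
  replace (S r <? k)%nat with true by (symmetry; apply Nat.ltb_lt; lia).
  rewrite !IH by lia; ring.
Qed.

Lemma leading_trues_cases k fl : (1 <= k)%nat ->
  (exists rest, fl = repeat true k ++ rest) \/
  (exists j rest, (j < k)%nat /\ fl = repeat true j ++ false :: rest) \/
  (exists j, (j < k)%nat /\ fl = repeat true j).
Proof.
  revert fl; induction k as [|k IH]; intros fl Hk; [lia|].
  destruct fl as [|[] fl].
  - right; right; exists 0%nat; split; [lia|reflexivity].
  - destruct (Nat.eq_dec k 0) as [->|Hk0]; [left; now exists fl|].
    destruct (IH fl ltac:(lia)) as [[rest ->]|[[j [rest [Hj ->]]]|[j [Hj ->]]]].
    + left; now exists rest.
    + right; left; exists (S j), rest; split; [lia|reflexivity].
    + right; right; exists (S j); split; [lia|reflexivity].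
  - right; left; exists 0%nat, fl; split; [lia|reflexivity].
Qed.

Fixpoint hsum (y u : R) (t : nat) : R :=
  match t with O => 0 | S t => y ^ t + u * hsum y u t end.

Lemma hsum_mul_sub y u t : (y - u) * hsum y u t = y ^ t - u ^ t.
Proof.
  induction t as [|t IH]; cbn [hsum pow]; [ring|].
  replace ((y - u) * (y ^ t + u * hsum y u t)) with ((y - u) * y ^ t + u * ((y - u) * hsum y u t))
    by ring.
  rewrite IH; ring.
Qed.

Lemma hsum_diag p t : p * hsum p p t = INR t * p ^ t.
Proof.
  induction t as [|t IH]; cbn [hsum]; [cbn; ring|].
  rewrite S_INR; cbn [pow].
  replace (p * (p ^ t + p * hsum p p t)) with (p * p ^ t + p * (p * hsum p p t)) by ring.
  rewrite IH; ring.
Qed.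

Lemma hsum_ge u y t : 0 <= u <= y -> INR t * u ^ t <= u * hsum u y t.
Proof.
  intro H; induction t as [|t IH]; cbn [hsum]; [cbn; lra|].
  rewrite S_INR; cbn [pow].
  assert (0 <= u ^ t) by (apply pow_le; lra).
  assert (0 <= INR t * u ^ t) by (apply Rmult_le_pos; [apply pos_INR | auto]).
  replace (u * (u ^ t + y * hsum u y t)) with (u * u ^ t + y * (u * hsum u y t)) by ring.
  assert (u * (INR t * u ^ t) <= y * (u * hsum u y t)) by (apply Rmult_le_compat; lra).
  nra.
Qed.

Fixpoint run_weight (p f : R) (t : nat) : R :=
  match t with O => 0 | S t => (1 - p) / f + p / f * run_weight p f t end.

Lemma run_weight_hsum p f t : f <> 0 -> run_weight p f t * f ^ t = (1 - p) * hsum f p t.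
Proof.
  intro Hf; induction t as [|t IH]; cbn [run_weight hsum pow]; [ring|].
  replace (((1 - p) / f + p / f * run_weight p f t) * (f * f ^ t))
    with ((1 - p) * f ^ t + p * (run_weight p f t * f ^ t)) by (field; auto).
  rewrite IH; ring.
Qed.

(* Off the diagonal the defining identity of [f_k] makes the weight exactly 1. *)
Lemma run_weight_le_1 k p f : 0 < p < 1 -> 0 < f ->
  f ^ k - f ^ (k + 1) = p ^ k - p ^ (k + 1) -> (f = p -> INR k * (1 - p) <= p) ->
  run_weight p f k <= 1.
Proof.
  intros Hp Hf Hid Hdiag.
  assert (Hfk : 0 < f ^ k) by (apply pow_lt; lra).
  pose proof (run_weight_hsum p f k ltac:(lra)) as Hw.
  destruct (Req_dec f p) as [->|Hne].
  - apply Rmult_le_reg_r with (p * p ^ k); [apply Rmult_lt_0_compat; lra|].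
    replace (run_weight p p k * (p * p ^ k)) with (p * ((1 - p) * hsum p p k)) by (rewrite <- Hw; ring).
    replace (p * ((1 - p) * hsum p p k)) with ((1 - p) * (p * hsum p p k)) by ring.
    rewrite hsum_diag; specialize (Hdiag eq_refl); nra.
  - assert (Hzero : (f - p) * ((1 - p) * hsum f p k - f ^ k) = 0).
    { replace ((f - p) * ((1 - p) * hsum f p k - f ^ k))
        with ((1 - p) * ((f - p) * hsum f p k) - (f - p) * f ^ k) by ring.
      rewrite hsum_mul_sub; rewrite !pow_add in Hid; cbn in Hid; nra. }
    apply Rmult_integral in Hzero as [|Hzero]; [lra|].
    apply Rmult_le_reg_r with (f ^ k); [auto|]; lra.
Qed.

Lemma nonempty_count_trues j fl : nonempty_count (repeat true j ++ fl) = nonempty_count fl.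
Proof. induction j as [|j IH]; cbn; auto. Qed.

Section RunBound.
Variables (k : nat) (p lf : R).
Hypothesis Hk : (1 <= k)%nat.
Hypothesis Hp : 0 <= p <= 1.
Hypothesis Hlf : lf <= 0.
Hypothesis Hweight : run_weight p (exp lf) k <= 1.

Definition run_bound (fl : list bool) : R :=
  exp ((INR (length fl) - (INR k - 1) - INR k * INR (nonempty_count fl)) * lf).

Lemma run_bound_true fl : run_bound (true :: fl) = run_bound fl * exp lf.
Proof.
  unfold run_bound, nonempty_count; rewrite <- exp_plus; cbn [length count_occ].
  destruct Bool.bool_dec; [discriminate|]; rewrite S_INR; f_equal; ring.
Qed.

Let capped_prob (r : nat) (fl : list bool) : R := if (r <? k)%nat then no_run_prob k p r fl else 0.

Lemma capped_prob_leading_trues rest :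
  (forall j, (j < k)%nat ->
     no_run_prob k p 0 (repeat true j ++ rest) <= run_bound (repeat true j ++ rest)) ->
  forall j, (j <= k)%nat ->
  capped_prob (k - j) (repeat true j ++ rest)
  <= run_bound (repeat true j ++ rest) * run_weight p (exp lf) j.
Proof.
  intros Hshort j; induction j as [|j IH]; intro Hj.
  - unfold capped_prob; rewrite Nat.sub_0_r, Nat.ltb_irrefl; cbn; lra.
  - unfold capped_prob; replace (k - S j <? k)%nat with true by (symmetry; apply Nat.ltb_lt; lia).
    cbn [repeat app no_run_prob]; replace (S (k - S j)) with (k - j)%nat by lia.
    fold (capped_prob (k - j) (repeat true j ++ rest)).
    rewrite run_bound_true; cbn [run_weight].
    set (B := run_bound (repeat true j ++ rest)); set (W := run_weight p (exp lf) j).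
    assert (Hexp : exp lf <> 0) by apply Rgt_not_eq, exp_pos.
    replace (B * exp lf * ((1 - p) / exp lf + p / exp lf * W)) with (p * (B * W) + (1 - p) * B)
      by (field; auto).
    apply Rplus_le_compat; apply Rmult_le_compat_l; try lra.
    + apply IH; lia.
    + apply Hshort; lia.
Qed.

Lemma no_run_prob_le_run_bound fl : no_run_prob k p 0 fl <= run_bound fl.
Proof.
  remember (length fl) as n eqn:Hn; revert fl Hn; induction n as [n IH] using lt_wf_ind; intros fl ->.
  destruct (leading_trues_cases k fl Hk) as [[rest ->]|[[j [rest [Hj ->]]]|[j [Hj ->]]]].
  - assert (Hshort : forall j, (j < k)%nat ->
        no_run_prob k p 0 (repeat true j ++ rest) <= run_bound (repeat true j ++ rest)).
    { intros j Hj; apply (IH (length (repeat true j ++ rest))); auto.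
      rewrite !length_app, !repeat_length; lia. }
    pose proof (capped_prob_leading_trues rest Hshort k (Nat.le_refl k)) as Hcap.
    unfold capped_prob in Hcap; rewrite Nat.sub_diag in Hcap.
    replace (0 <? k)%nat with true in Hcap by (symmetry; apply Nat.ltb_lt; lia).
    eapply Rle_trans; [exact Hcap|].
    rewrite <- (Rmult_1_r (run_bound _)) at 2.
    apply Rmult_le_compat_l; [left; apply exp_pos | exact Hweight].
  - rewrite no_run_prob_trues_false by lia.
    eapply Rle_trans; [apply (IH (length rest)); auto; rewrite length_app, repeat_length; cbn; lia|].
    unfold run_bound; apply exp_mul_nonpos_le; auto.
    rewrite nonempty_count_trues, length_app, repeat_length; unfold nonempty_count.
    cbn [length count_occ].
    destruct Bool.bool_dec as [_|]; [|contradiction].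
    rewrite plus_INR, !S_INR.
    assert (INR j + 1 <= INR k) by (rewrite <- S_INR; apply le_INR; lia).
    nra.
  - rewrite no_run_prob_trues by lia.
    unfold run_bound; rewrite <- (app_nil_r (repeat true j)), nonempty_count_trues, app_nil_r.
    apply Rle_trans with (exp (0 * lf)); [rewrite Rmult_0_l, exp_0; lra|].
    apply exp_mul_nonpos_le; auto.
    rewrite repeat_length; cbn [nonempty_count count_occ INR].
    assert (INR j + 1 <= INR k) by (rewrite <- S_INR; apply le_INR; lia).
    lra.
Qed.

End RunBound.

(** * Strips of parallel lines *)

Lemma forallb_map {A B} (f : B -> bool) (g : A -> B) l :
  forallb f (map g l) = forallb (fun x => f (g x)) l.
Proof. induction l as [|x l IH]; cbn; now rewrite ?IH. Qed.

Lemma forallb_ext_in {A} (f g : A -> bool) l :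
  (forall x, In x l -> f x = g x) -> forallb f l = forallb g l.
Proof.
  induction l as [|x l IH]; intro H; cbn; auto.
  rewrite H by (now left); rewrite IH; auto.
  intros y Hy; apply H; now right.
Qed.

Definition line_sites (site : Z -> Z -> Z * Z) (J lines : list Z) : list (Z * Z) :=
  flat_map (fun i => map (site i) J) lines.

Lemma in_line_sites site J lines p :
  In p (line_sites site J lines) <-> exists i j, In i lines /\ In j J /\ p = site i j.
Proof.
  unfold line_sites; rewrite in_flat_map; split.
  - intros [i [Hi Hp]]; apply in_map_iff in Hp as [j [<- Hj]]; now exists i, j.
  - intros [i [j [Hi [Hj ->]]]]; exists i; split; [auto | now apply in_map].
Qed.

Section Lines.
Variables (site : Z -> Z -> Z * Z) (J : list Z).
Hypothesis site_inj : forall i j i' j', site i j = site i' j' -> i = i' /\ j = j'.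
Hypothesis HJ : NoDup J.

Lemma NoDup_line_sites lines : NoDup lines -> NoDup (line_sites site J lines).
Proof.
  induction lines as [|i lines IH]; intro Hnd; cbn; [constructor|].
  inversion Hnd as [|? ? Hi Hlines]; subst; apply NoDup_app; auto.
  - apply FinFun.Injective_map_NoDup_in; auto; intros j j' _ _ E; now apply site_inj in E.
  - intros p Hp Hp'; apply in_map_iff in Hp as [j [<- _]].
    apply in_line_sites in Hp' as [i' [j' [Hi' [_ E]]]]; apply site_inj in E as [<- _]; contradiction.
Qed.

Variables (k : nat) (q : R) (outer : config -> Z -> bool).
Hypothesis outer_ignores : forall i i', ignores (fun w => outer w i') (map (site i) J).

(* [outer w i]: the part of line [i] outside the strip is empty; [J] indexes the part inside. *)
Definition line_empty (w : config) (i : Z) : bool := outer w i && forallb (fun j => w (site i j)) J.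

Lemma line_empty_ignores i lines :
  ~ In i lines -> ignores (fun w => line_empty w i) (line_sites site J lines).
Proof.
  intros Hi w p v Hp; unfold line_empty.
  apply in_line_sites in Hp as [i' [j' [Hi' [Hj' ->]]]].
  rewrite (outer_ignores i' i) by (now apply in_map); f_equal.
  apply forallb_ext_in; intros j _; apply upd_neq.
  intro E; apply site_inj in E as [-> _]; contradiction.
Qed.

Lemma outer_map_ignores i lines : ignores (fun w => map (outer w) lines) (map (site i) J).
Proof. intros w p v Hp; apply map_ext; intro i'; exact (outer_ignores i i' w p v Hp). Qed.

Lemma expect_no_run lines : forall r w, NoDup lines ->
  expect q (line_sites site J lines)
    (fun w => indicator (no_run k r (map (line_empty w) lines))) w =
  no_run_prob k (q ^ length J) r (map (outer w) lines).
Proof.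
  induction lines as [|i lines IH]; intros r w Hnd; [reflexivity|].
  inversion Hnd as [|? ? Hi Hlines]; subst.
  change (line_sites site J (i :: lines)) with (map (site i) J ++ line_sites site J lines).
  rewrite expect_app.
  set (P := fun r w => no_run_prob k (q ^ length J) r (map (outer w) lines)).
  rewrite (expect_ext q _ _ (fun w => if line_empty w i
                                      then (if (S r <? k)%nat then P (S r) w else 0) else P 0%nat w)).
  2: { intro w'; cbn [map no_run].
       rewrite (expect_ext q _ _ (fun w => if line_empty w i
           then (if (S r <? k)%nat then indicator (no_run k (S r) (map (line_empty w) lines)) else 0)
           else indicator (no_run k 0 (map (line_empty w) lines))))
         by (intro; destruct (line_empty _ i), (S r <? k)%nat; reflexivity).
       rewrite expect_if by now apply line_empty_ignores.
       destruct (line_empty w' i), (S r <? k)%nat; auto; now rewrite expect_ignored. }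
  assert (HP : forall r', ignores (P r') (map (site i) J))
    by (intros r' w0 p v Hp; unfold P; now rewrite (outer_map_ignores i lines w0 p v Hp)).
  assert (HA : ignores (fun w => if (S r <? k)%nat then P (S r) w else 0) (map (site i) J))
    by (intros w0 p v Hp; now rewrite HP).
  unfold line_empty; rewrite (expect_ext q _ _ (fun w' =>
      if outer w' i
      then (if forallb w' (map (site i) J) then (if (S r <? k)%nat then P (S r) w' else 0)
            else P 0%nat w')
      else P 0%nat w')) by (intro; rewrite forallb_map; now destruct (outer _ i)).
  rewrite expect_if by apply outer_ignores.
  cbn [map no_run_prob]; destruct (outer w i).
  - rewrite expect_all_empty, length_map; auto.
    apply FinFun.Injective_map_NoDup_in; auto; intros j j' _ _ E; now apply site_inj in E.
  - now rewrite expect_ignored.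
Qed.

Lemma expect_mul_no_run F lines w : NoDup lines -> ignores F (line_sites site J lines) ->
  expect q (line_sites site J lines)
    (fun w => F w * indicator (no_run k 0 (map (line_empty w) lines))) w =
  F w * no_run_prob k (q ^ length J) 0 (map (outer w) lines).
Proof. intros Hnd HF; now rewrite expect_mull, expect_no_run. Qed.

End Lines.

Lemma nonempty_count_forallb {A} (g : A -> bool) l :
  forallb g l = false -> (1 <= nonempty_count (map g l))%nat.
Proof.
  induction l as [|x l IH]; cbn; [discriminate|].
  unfold nonempty_count in *; destruct (g x); cbn; [auto | lia].
Qed.

Lemma nonempty_count_lines_le site J lines w :
  (nonempty_count (map (fun i => forallb (fun j => w (site i j)) J) lines)
   <= nonempty_count (map w (line_sites site J lines)))%nat.
Proof.
  induction lines as [|i lines IH]; [cbn; lia|].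
  change (line_sites site J (i :: lines)) with (map (site i) J ++ line_sites site J lines).
  unfold nonempty_count in *; rewrite map_app, count_occ_app; cbn [map count_occ].
  destruct (forallb (fun j => w (site i j)) J) eqn:Hall; cbn; [lia|].
  rewrite <- (forallb_map w (site i)) in Hall; apply nonempty_count_forallb in Hall.
  unfold nonempty_count in Hall; lia.
Qed.

(** * The rectangle [R'] split into center, strips and corners *)

Definition col_site (c y : Z) : Z * Z := (c, y).
Definition row_site (r x : Z) : Z * Z := (x, r).

Lemma col_site_inj c y c' y' : col_site c y = col_site c' y' -> c = c' /\ y = y'.
Proof. unfold col_site; intro E; now injection E. Qed.

Lemma row_site_inj r x r' x' : row_site r x = row_site r' x' -> r = r' /\ x = x'.
Proof. unfold row_site; intro E; now injection E. Qed.

Lemma list_prod_line_sites xs ys : list_prod xs ys = line_sites col_site ys xs.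
Proof. induction xs as [|x xs IH]; cbn; now rewrite ?IH. Qed.

Lemma length_line_sites site J lines :
  length (line_sites site J lines) = (length lines * length J)%nat.
Proof. apply flat_map_constant_length; intros; apply length_map. Qed.

Lemma pow_unit_interval q n : 0 <= q <= 1 -> 0 <= q ^ n <= 1.
Proof. intro Hq; split; [apply pow_le; lra | rewrite <- (pow1 n); apply pow_incr; lra]. Qed.

(* [R = cols_mid x rows_mid] and
   [R' = (cols_left ++ cols_mid ++ cols_right) x (rows_bot ++ rows_mid ++ rows_top)]. *)
Section Rectangle.
Variables (k : nat) (q : R) (x1 y1 : Z) (a b l1 l2 m1 m2 : nat).

Definition cols_left := zrange x1 l1.
Definition cols_mid := zrange (x1 + Z.of_nat l1) a.
Definition cols_right := zrange (x1 + Z.of_nat l1 + Z.of_nat a) l2.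
Definition rows_bot := zrange y1 m1.
Definition rows_mid := zrange (y1 + Z.of_nat m1) b.
Definition rows_top := zrange (y1 + Z.of_nat m1 + Z.of_nat b) m2.
Definition cols_out := cols_left ++ cols_right.
Definition rows_out := rows_bot ++ rows_top.

Ltac in_region :=
  unfold cols_out, rows_out, cols_left, cols_mid, cols_right, rows_bot, rows_mid, rows_top in *;
  rewrite ?in_app_iff, ?in_zrange in *; lia.

Ltac site_witness x y :=
  first [ exists x, y; split; [|split]; [in_region | in_region | reflexivity]
        | exists y, x; split; [|split]; [in_region | in_region | reflexivity] ].

Lemma NoDup_cols_out : NoDup cols_out.
Proof. apply NoDup_app; try apply NoDup_zrange; intros; in_region. Qed.

Lemma NoDup_rows_out : NoDup rows_out.
Proof. apply NoDup_app; try apply NoDup_zrange; intros; in_region. Qed.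

Lemma NoDup_cols_mid : NoDup cols_mid.
Proof. apply NoDup_zrange. Qed.

Lemma NoDup_rows_mid : NoDup rows_mid.
Proof. apply NoDup_zrange. Qed.

Definition corners := line_sites col_site rows_out cols_out.
Definition strip_left := line_sites col_site rows_mid cols_left.
Definition strip_right := line_sites col_site rows_mid cols_right.
Definition strip_bot := line_sites row_site cols_mid rows_bot.
Definition strip_top := line_sites row_site cols_mid rows_top.
Definition center := line_sites col_site rows_mid cols_mid.

Lemma sites_perm :
  Permutation (sites_of x1 y1 a b (l1 + l2) (m1 + m2))
              (corners ++ strip_left ++ strip_right ++ strip_bot ++ strip_top ++ center).
Proof.
  unfold sites_of; rewrite list_prod_line_sites; apply NoDup_Permutation_bis.
  - apply NoDup_line_sites; auto using col_site_inj, NoDup_zrange.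
  - rewrite !length_app; unfold corners, strip_left, strip_right, strip_bot, strip_top, center.
    rewrite !length_line_sites; unfold cols_out, rows_out, cols_left, cols_mid, cols_right,
      rows_bot, rows_mid, rows_top; rewrite !length_app, !length_zrange; nia.
  - intros p Hp; apply in_line_sites in Hp as (x & y & Hx & Hy & ->).
    unfold corners, strip_left, strip_right, strip_bot, strip_top, center.
    rewrite !in_app_iff, !in_line_sites.
    assert (Hx' : In x cols_left \/ In x cols_mid \/ In x cols_right) by in_region.
    assert (Hy' : In y rows_bot \/ In y rows_mid \/ In y rows_top) by in_region.
    clear Hx Hy.
    destruct Hx' as [Hx|[Hx|Hx]], Hy' as [Hy|[Hy|Hy]];
      repeat (first [left; solve [site_witness x y] | right]); solve [site_witness x y].
Qed.

Lemma corners_by_rows : Permutation (line_sites row_site cols_out rows_out) corners.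
Proof.
  apply NoDup_Permutation.
  - apply NoDup_line_sites; auto using row_site_inj, NoDup_cols_out, NoDup_rows_out.
  - apply NoDup_line_sites; auto using col_site_inj, NoDup_cols_out, NoDup_rows_out.
  - intro p; unfold corners; rewrite !in_line_sites.
    split; intros (i & j & Hi & Hj & ->); now exists j, i.
Qed.

Definition col_outer (w : config) (c : Z) : bool := forallb (fun y => w (c, y)) rows_out.
Definition row_outer (w : config) (r : Z) : bool := forallb (fun x => w (x, r)) cols_out.

Definition col_ok (cols : list Z) (w : config) : bool :=
  no_run k 0 (map (line_empty col_site rows_mid col_outer w) cols).
Definition row_ok (rows : list Z) (w : config) : bool :=
  no_run k 0 (map (line_empty row_site cols_mid row_outer w) rows).
Definition col_prob (cols : list Z) (w : config) : R :=
  no_run_prob k (q ^ b) 0 (map (col_outer w) cols).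
Definition row_prob (rows : list Z) (w : config) : R :=
  no_run_prob k (q ^ a) 0 (map (row_outer w) rows).

Definition in_cols (cols : list Z) (p : Z * Z) : Prop := In (fst p) cols.
Definition in_rows (rows : list Z) (p : Z * Z) : Prop := In (snd p) rows.

Lemma col_ok_depends cols : depends_only (col_ok cols) (in_cols cols).
Proof.
  intros w w' H; unfold col_ok; f_equal; apply map_ext_in; intros c Hc.
  unfold line_empty, col_outer, col_site; f_equal; apply forallb_ext_in; intros; now apply H.
Qed.

Lemma col_prob_depends cols : depends_only (col_prob cols) (in_cols cols).
Proof.
  intros w w' H; unfold col_prob; f_equal; apply map_ext_in; intros c Hc.
  apply forallb_ext_in; intros; now apply H.
Qed.

Lemma row_ok_depends rows : depends_only (row_ok rows) (in_rows rows).
Proof.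
  intros w w' H; unfold row_ok; f_equal; apply map_ext_in; intros r Hr.
  unfold line_empty, row_outer, row_site; f_equal; apply forallb_ext_in; intros; now apply H.
Qed.

Lemma row_prob_depends rows : depends_only (row_prob rows) (in_rows rows).
Proof.
  intros w w' H; unfold row_prob; f_equal; apply map_ext_in; intros r Hr.
  apply forallb_ext_in; intros; now apply H.
Qed.

Lemma col_outer_ignores c c' : ignores (fun w => col_outer w c') (map (col_site c) rows_mid).
Proof.
  apply (ignores_of_depends_only _ (in_rows rows_out)).
  - intros w1 w2 H; unfold col_outer; apply forallb_ext_in; intros; now apply H.
  - intros p Hp; apply in_map_iff in Hp as (y & <- & Hy); unfold in_rows, col_site; cbn; in_region.
Qed.

Lemma row_outer_ignores r r' : ignores (fun w => row_outer w r') (map (row_site r) cols_mid).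
Proof.
  apply (ignores_of_depends_only _ (in_cols cols_out)).
  - intros w1 w2 H; unfold row_outer; apply forallb_ext_in; intros; now apply H.
  - intros p Hp; apply in_map_iff in Hp as (x & <- & Hx); unfold in_cols, row_site; cbn; in_region.
Qed.

Lemma col_ok_ignores cols s : (forall p, In p s -> ~ in_cols cols p) ->
  ignores (fun w => indicator (col_ok cols w)) s.
Proof. intro H; apply ignores_comp, (ignores_of_depends_only _ _ _ (col_ok_depends cols) H). Qed.

Lemma row_ok_ignores rows s : (forall p, In p s -> ~ in_rows rows p) ->
  ignores (fun w => indicator (row_ok rows w)) s.
Proof. intro H; apply ignores_comp, (ignores_of_depends_only _ _ _ (row_ok_depends rows) H). Qed.

Lemma col_prob_ignores cols s : (forall p, In p s -> ~ in_cols cols p) -> ignores (col_prob cols) s.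
Proof. exact (ignores_of_depends_only _ _ _ (col_prob_depends cols)). Qed.

Lemma row_prob_ignores rows s : (forall p, In p s -> ~ in_rows rows p) -> ignores (row_prob rows) s.
Proof. exact (ignores_of_depends_only _ _ _ (row_prob_depends rows)). Qed.

Ltac outside_region :=
  intros ? Hp; apply in_line_sites in Hp as (? & ? & ? & ? & ->);
  unfold in_cols, in_rows, col_site, row_site; cbn; in_region.

Ltac strip_ignores :=
  repeat apply ignores_mul;
  first [ apply col_ok_ignores | apply row_ok_ignores
        | apply col_prob_ignores | apply row_prob_ignores ];
  outside_region.

Lemma expect_col_strip F cols w : NoDup cols -> ignores F (line_sites col_site rows_mid cols) ->
  expect q (line_sites col_site rows_mid cols) (fun w => F w * indicator (col_ok cols w)) w =
  F w * col_prob cols w.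
Proof.
  intros Hnd HF; unfold col_ok, col_prob.
  rewrite expect_mul_no_run; auto using col_site_inj, NoDup_rows_mid, col_outer_ignores.
  unfold rows_mid; now rewrite length_zrange.
Qed.

Lemma expect_row_strip F rows w : NoDup rows -> ignores F (line_sites row_site cols_mid rows) ->
  expect q (line_sites row_site cols_mid rows) (fun w => F w * indicator (row_ok rows w)) w =
  F w * row_prob rows w.
Proof.
  intros Hnd HF; unfold row_ok, row_prob.
  rewrite expect_mul_no_run; auto using row_site_inj, NoDup_cols_mid, row_outer_ignores.
  unfold cols_mid; now rewrite length_zrange.
Qed.

(* A nonempty corner site blocks at most one column and one row. *)
Lemma col_outer_count_le w :
  (nonempty_count (map (col_outer w) cols_left) + nonempty_count (map (col_outer w) cols_right)
   <= nonempty_count (map w corners))%nat.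
Proof.
  unfold nonempty_count; rewrite <- count_occ_app, <- map_app.
  exact (nonempty_count_lines_le col_site rows_out cols_out w).
Qed.

Lemma row_outer_count_le w :
  (nonempty_count (map (row_outer w) rows_bot) + nonempty_count (map (row_outer w) rows_top)
   <= nonempty_count (map w corners))%nat.
Proof.
  unfold nonempty_count; rewrite <- count_occ_app, <- map_app.
  eapply Nat.le_trans; [exact (nonempty_count_lines_le row_site cols_out rows_out w)|].
  apply Nat.eq_le_incl, Permutation_count_occ, Permutation_map, corners_by_rows.
Qed.

Lemma cols_split : zrange x1 (a + (l1 + l2)) = cols_left ++ cols_mid ++ cols_right.
Proof. replace (a + (l1 + l2))%nat with (l1 + (a + l2))%nat by lia; now rewrite !zrange_app. Qed.

Lemma rows_split : zrange y1 (b + (m1 + m2)) = rows_bot ++ rows_mid ++ rows_top.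
Proof. replace (b + (m1 + m2))%nat with (m1 + (b + m2))%nat by lia; now rewrite !zrange_app. Qed.

Lemma col_empty_line_empty w c :
  col_empty w (zrange y1 (b + (m1 + m2))) c = line_empty col_site rows_mid col_outer w c.
Proof.
  unfold col_empty, line_empty, col_outer, col_site, rows_out; rewrite rows_split, !forallb_app.
  now destruct (forallb _ rows_bot), (forallb _ rows_mid), (forallb _ rows_top).
Qed.

Lemma row_empty_line_empty w r :
  row_empty w (zrange x1 (a + (l1 + l2))) r = line_empty row_site cols_mid row_outer w r.
Proof.
  unfold row_empty, line_empty, row_outer, row_site, cols_out; rewrite cols_split, !forallb_app.
  now destruct (forallb _ cols_left), (forallb _ cols_mid), (forallb _ cols_right).
Qed.

Hypothesis Hk : (1 <= k)%nat.

Definition D_split (w : config) : bool :=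
  D_event k (x1 + Z.of_nat l1) (y1 + Z.of_nat m1) x1 y1 a b (l1 + l2) (m1 + m2) w.

Lemma D_split_strips w :
  D_split w = col_ok cols_left w && col_ok cols_right w && row_ok rows_bot w && row_ok rows_top w.
Proof.
  unfold D_split, D_event.
  replace (x1 + Z.of_nat (a + (l1 + l2)))%Z
    with (x1 + Z.of_nat l1 + Z.of_nat a + Z.of_nat l2)%Z by lia.
  replace (y1 + Z.of_nat (b + (m1 + m2)))%Z
    with (y1 + Z.of_nat m1 + Z.of_nat b + Z.of_nat m2)%Z by lia.
  rewrite !kconsec_no_run by exact Hk.
  unfold col_ok, row_ok.
  erewrite !(map_ext _ _ (col_empty_line_empty w)), !(map_ext _ _ (row_empty_line_empty w)).
  reflexivity.
Qed.

Definition strip_probs (w : config) : R :=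
  col_prob cols_left w * col_prob cols_right w * row_prob rows_bot w * row_prob rows_top w.

(* Conditionally on the corners, the four strips are independent. *)
Lemma expect_strips w :
  expect q (strip_left ++ strip_right ++ strip_bot ++ strip_top ++ center)
    (fun w => indicator (D_split w)) w = strip_probs w.
Proof.
  set (okL := fun w => indicator (col_ok cols_left w)).
  set (okR := fun w => indicator (col_ok cols_right w)).
  set (okB := fun w => indicator (row_ok rows_bot w)).
  set (okT := fun w => indicator (row_ok rows_top w)).
  set (D := fun w => indicator (D_split w)).
  assert (Hcenter : forall w, expect q center D w = okL w * okR w * okB w * okT w).
  { intro w'; rewrite (expect_ext _ _ _ (fun w => okL w * okR w * okB w * okT w)).
    - apply expect_ignored; unfold center; strip_ignores.
    - intro; unfold D; now rewrite D_split_strips, !indicator_andb. }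
  assert (Htop : forall w, expect q (strip_top ++ center) D w =
                           okL w * okR w * okB w * row_prob rows_top w).
  { intro w'; rewrite expect_app, (expect_ext _ _ _ _ _ Hcenter).
    apply expect_row_strip; [apply NoDup_zrange | unfold strip_top; strip_ignores]. }
  assert (Hbot : forall w, expect q (strip_bot ++ strip_top ++ center) D w =
                           okL w * okR w * row_prob rows_bot w * row_prob rows_top w).
  { intro w'; rewrite expect_app,
      (expect_ext _ _ _ (fun w => okL w * okR w * row_prob rows_top w * okB w))
      by (intro; rewrite Htop; ring).
    unfold strip_bot, okB; rewrite expect_row_strip; [ring | apply NoDup_zrange | strip_ignores]. }
  assert (Hright : forall w, expect q (strip_right ++ strip_bot ++ strip_top ++ center) D w =
                   okL w * col_prob cols_right w * row_prob rows_bot w * row_prob rows_top w).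
  { intro w'; rewrite expect_app,
      (expect_ext _ _ _ (fun w => okL w * row_prob rows_bot w * row_prob rows_top w * okR w))
      by (intro; rewrite Hbot; ring).
    unfold strip_right, okR; rewrite expect_col_strip; [ring | apply NoDup_zrange | strip_ignores]. }
  rewrite expect_app, (expect_ext _ _ _ (fun w =>
    col_prob cols_right w * row_prob rows_bot w * row_prob rows_top w * okL w))
    by (intro; rewrite Hright; ring).
  unfold strip_probs, strip_left, okL.
  rewrite expect_col_strip; [ring | apply NoDup_zrange | strip_ignores].
Qed.

Lemma probD_corners :
  probL q (sites_of x1 y1 a b (l1 + l2) (m1 + m2))
    (D_event k (x1 + Z.of_nat l1) (y1 + Z.of_nat m1) x1 y1 a b (l1 + l2) (m1 + m2))
    (fun _ => false) =
  expect q corners strip_probs (fun _ => false).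
Proof.
  rewrite probL_expect, (expect_perm _ _ _ _ _ sites_perm), expect_app.
  apply expect_ext, expect_strips.
Qed.

Hypothesis Hq : 0 <= q <= 1.
Variables (lfa lfb : R).
Hypothesis Hlfa : lfa <= 0.
Hypothesis Hlfb : lfb <= 0.
Hypothesis Hweight_a : run_weight (q ^ a) (exp lfa) k <= 1.
Hypothesis Hweight_b : run_weight (q ^ b) (exp lfb) k <= 1.

Lemma strip_probs_le w :
  strip_probs w <=
  exp ((INR (l1 + l2) - 2 * (INR k - 1)) * lfb + (INR (m1 + m2) - 2 * (INR k - 1)) * lfa
                        + INR (nonempty_count (map w corners)) * (- INR k * (lfa + lfb))).
Proof.
  pose proof (pow_unit_interval q a Hq); pose proof (pow_unit_interval q b Hq).
  assert (Hcol : forall cols, col_prob cols w <= run_bound k lfb (map (col_outer w) cols))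
    by (intro; now apply no_run_prob_le_run_bound).
  assert (Hrow : forall rows, row_prob rows w <= run_bound k lfa (map (row_outer w) rows))
    by (intro; now apply no_run_prob_le_run_bound).
  assert (Hcol0 : forall cols, 0 <= col_prob cols w) by (intro; now apply no_run_prob_nonneg).
  assert (Hrow0 : forall rows, 0 <= row_prob rows w) by (intro; now apply no_run_prob_nonneg).
  unfold strip_probs; eapply Rle_trans.
  { apply Rmult_le_compat; [repeat apply Rmult_le_pos; auto | auto | | apply Hrow].
    apply Rmult_le_compat; [repeat apply Rmult_le_pos; auto | auto | | apply Hrow].
    apply Rmult_le_compat; auto. }
  unfold run_bound; rewrite <- !exp_plus; apply exp_le.
  rewrite !length_map; unfold cols_left, cols_right, rows_bot, rows_top; rewrite !length_zrange.
  fold cols_left cols_right rows_bot rows_top.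
  pose proof (le_INR _ _ (col_outer_count_le w)) as Hc.
  pose proof (le_INR _ _ (row_outer_count_le w)) as Hr.
  rewrite plus_INR in Hc, Hr; rewrite !plus_INR.
  assert (HK : 0 <= INR k) by apply pos_INR.
  assert (Hkb : INR k * lfb <= 0) by nra; assert (Hka : INR k * lfa <= 0) by nra.
  pose proof (Rmult_le_compat_neg_l _ _ _ Hkb Hc); pose proof (Rmult_le_compat_neg_l _ _ _ Hka Hr).
  nra.
Qed.

Lemma expect_corners_le :
  expect q corners strip_probs (fun _ => false) <=
  exp ((INR (l1 + l2) - 2 * (INR k - 1)) * lfb + (INR (m1 + m2) - 2 * (INR k - 1)) * lfa) *
  (q + (1 - q) * exp (- INR k * (lfa + lfb))) ^ ((l1 + l2) * (m1 + m2)).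
Proof.
  eapply Rle_trans.
  { apply expect_le with (Y := fun w =>
      exp ((INR (l1 + l2) - 2 * (INR k - 1)) * lfb + (INR (m1 + m2) - 2 * (INR k - 1)) * lfa) *
      exp (INR (nonempty_count (map w corners)) * (- INR k * (lfa + lfb)))); [exact Hq|].
    intro w; rewrite <- exp_plus; apply strip_probs_le. }
  rewrite expect_mull, expect_exp_nonempty_count.
  - right; f_equal; unfold corners; rewrite length_line_sites.
    unfold cols_out, rows_out, cols_left, cols_right, rows_bot, rows_top.
    rewrite !length_app, !length_zrange.
    f_equal; lia.
  - apply NoDup_line_sites; auto using col_site_inj, NoDup_cols_out, NoDup_rows_out.
  - intros ? ? ? ?; reflexivity.
Qed.

End Rectangle.

(** * The function [f_k] *)

Lemma pow_sub_pow_succ_lt k u y : (1 <= k)%nat -> 0 <= u < y -> (INR k + 1) * y <= INR k ->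
  u ^ k - u ^ (k + 1) < y ^ k - y ^ (k + 1).
Proof.
  intros Hk Hu Hy; set (T := hsum u y k).
  assert (HK : 1 <= INR k) by (apply (le_INR 1); lia).
  assert (Hy1 : y < 1) by nra.
  assert (H1 : (u - y) * T = u ^ k - y ^ k) by apply hsum_mul_sub.
  assert (H2 : (u - y) * (u ^ k + y * T) = u ^ (k + 1) - y ^ (k + 1))
    by (rewrite Nat.add_1_r; apply (hsum_mul_sub u y (S k))).
  assert (Hgap : u ^ k < (1 - y) * T).
  { destruct (Req_dec u 0) as [->|Hu0].
    - rewrite pow_i in * by lia.
      assert (0 < y ^ k) by (apply pow_lt; lra).
      apply Rmult_lt_0_compat; nra.
    - assert (0 < u ^ k) by (apply pow_lt; lra).
      pose proof (hsum_ge u y k ltac:(lra)) as HT; fold T in HT.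
      apply Rmult_lt_reg_l with u; [lra|].
      assert (u * u ^ k < y * u ^ k) by (apply Rmult_lt_compat_r; lra).
      assert (y * u ^ k <= (1 - y) * (INR k * u ^ k)) by nra.
      assert ((1 - y) * (INR k * u ^ k) <= (1 - y) * (u * T)) by (apply Rmult_le_compat_l; lra).
      nra. }
  nra.
Qed.

(* A fixed point of [f_k] is the maximum [k/(k+1)] of [x^k - x^(k+1)]. *)
Lemma fk_fixed_point k f x : (1 <= k)%nat -> is_fk k f -> 0 < x < 1 -> f x = x ->
  INR k * (1 - x) <= x.
Proof.
  intros Hk [Hrange [Hdecr Hid]] Hx Hfx.
  destruct (Rle_lt_dec (INR k * (1 - x)) x) as [|Hlt]; [assumption | exfalso].
  set (K := INR k) in *; assert (HK : 1 <= K) by (apply (le_INR 1); lia).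
  set (y := (x + K / (K + 1)) / 2).
  assert (Hmax : K / (K + 1) * (K + 1) = K) by (field; lra).
  assert (Hxy : x < y) by (unfold y; nra).
  assert (Hy : (K + 1) * y <= K) by (unfold y; nra).
  assert (Hy1 : 0 <= y <= 1) by (unfold y; nra).
  assert (Hfy : f y < x) by (rewrite <- Hfx; apply Hdecr; lra).
  pose proof (proj1 (Hrange y Hy1)).
  pose proof (pow_sub_pow_succ_lt k (f y) y Hk ltac:(lra) Hy).
  rewrite Hid in *; lra.
Qed.

Lemma fk_pos k f x : is_fk k f -> 0 <= x < 1 -> 0 < f x <= 1.
Proof.
  intros [Hrange [Hdecr _]] Hx.
  destruct (Hrange 1 ltac:(lra)), (Hrange x ltac:(lra)).
  split; [apply Rle_lt_trans with (f 1); [|apply Hdecr] | ]; lra.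
Qed.

Lemma run_weight_fk k f p : (1 <= k)%nat -> is_fk k f -> 0 < p < 1 -> run_weight p (f p) k <= 1.
Proof.
  intros Hk Hf Hp; destruct (fk_pos k f p Hf ltac:(lra)).
  apply run_weight_le_1; auto.
  - destruct Hf as [_ [_ Hid]]; apply Hid; lra.
  - intro Hfix; now apply (fk_fixed_point k f p).
Qed.

Lemma exp_pow x n : exp x ^ n = exp (INR n * x).
Proof.
  induction n as [|n IH]; [cbn; now rewrite Rmult_0_l, exp_0|].
  rewrite S_INR; cbn [pow]; rewrite IH, <- exp_plus; f_equal; ring.
Qed.

Lemma pow_mix_le_exp q s G n : 0 <= q <= 1 -> 1 - q <= s -> 0 <= G ->
  (q + (1 - q) * G) ^ n <= exp (INR n * s * G).
Proof.
  intros Hq Hs HG.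
  assert (Hbase : q + (1 - q) * G <= exp (s * G)).
  { pose proof (exp_ineq1_le ((1 - q) * (G - 1))).
    apply Rle_trans with (exp ((1 - q) * (G - 1))); [lra | apply exp_le; nra]. }
  rewrite Rmult_assoc, <- exp_pow; apply pow_incr; split; [nra | exact Hbase].
Qed.

Lemma ln_fk_bounds k f p : (1 <= k)%nat -> is_fk k f -> 0 < p < 1 ->
  ln (f p) <= 0 /\ run_weight p (exp (ln (f p))) k <= 1.
Proof.
  intros Hk Hf Hp; destruct (fk_pos k f p Hf ltac:(lra)) as [Hpos Hle1].
  rewrite exp_ln by exact Hpos; split; [|now apply run_weight_fk].
  rewrite <- ln_1; destruct Hle1 as [Hlt | ->]; [left; now apply ln_increasing | right; reflexivity].
Qed.

Lemma gk_exp_pow f n s : gk f (INR n * s) = - ln (f (exp (- s) ^ n)).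
Proof. unfold gk; rewrite exp_pow; do 4 f_equal; ring. Qed.

Lemma exp_neg_pow_bounds s n : 0 < s -> (1 <= n)%nat -> 0 < exp (- s) ^ n < 1.
Proof.
  intros Hs Hn; assert (exp (- s) < 1) by (rewrite <- exp_0; apply exp_increasing; lra).
  split; [apply pow_lt, exp_pos | apply pow_lt_1_compat; [split; [left; apply exp_pos|] | lia]]; lra.
Qed.

Lemma probD_le_split k f s x1 y1 a b l1 l2 m1 m2 :
  (1 <= k)%nat -> is_fk k f -> 0 < s -> (1 <= a)%nat -> (1 <= b)%nat ->
  probD s k (x1 + Z.of_nat l1) (y1 + Z.of_nat m1) x1 y1 a b (l1 + l2) (m1 + m2) <=
  exp (- (INR (m1 + m2) - 2 * (INR k - 1)) * gk f (INR a * s)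
       - (INR (l1 + l2) - 2 * (INR k - 1)) * gk f (INR b * s)
       + INR (l1 + l2) * INR (m1 + m2) * s * exp (INR k * (gk f (INR a * s) + gk f (INR b * s)))).
Proof.
  intros Hk Hf Hs Ha Hb; rewrite !gk_exp_pow; unfold probD.
  set (q := exp (- s)).
  assert (Hq : 0 <= q <= 1)
    by (pose proof (exp_neg_pow_bounds s 1 Hs (le_n 1)) as H; rewrite pow_1 in H; unfold q; lra).
  assert (Hqs : 1 - q <= s) by (pose proof (exp_ineq1_le (- s)); unfold q; lra).
  destruct (ln_fk_bounds k f (q ^ a) Hk Hf (exp_neg_pow_bounds s a Hs Ha)) as [Hlfa Hwa].
  destruct (ln_fk_bounds k f (q ^ b) Hk Hf (exp_neg_pow_bounds s b Hs Hb)) as [Hlfb Hwb].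
  rewrite (probD_corners k q x1 y1 a b l1 l2 m1 m2 Hk).
  eapply Rle_trans;
    [exact (expect_corners_le k q x1 y1 a b l1 l2 m1 m2 Hk Hq _ _ Hlfa Hlfb Hwa Hwb)|].
  eapply Rle_trans.
  { apply Rmult_le_compat_l; [left; apply exp_pos|].
    apply pow_mix_le_exp; [exact Hq | exact Hqs | left; apply exp_pos]. }
  rewrite <- exp_plus, mult_INR; right; f_equal.
  replace (INR k * (- ln (f (q ^ a)) + - ln (f (q ^ b))))
    with (- INR k * (ln (f (q ^ a)) + ln (f (q ^ b)))) by ring.
  ring.
Qed.

Theorem mainTheorem11 (k : nat) (f : R -> R) (s : R) (x0 y0 x1 y1 : Z) (a b l m : nat) :
  (1 <= k)%nat -> is_fk k f -> 0 < s ->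
  (1 <= a)%nat -> (1 <= b)%nat ->
  (* R ⊆ R' *)
  (x1 <= x0)%Z -> (x0 + Z.of_nat a <= x1 + Z.of_nat (a + l))%Z ->
  (y1 <= y0)%Z -> (y0 + Z.of_nat b <= y1 + Z.of_nat (b + m))%Z ->
  probD s k x0 y0 x1 y1 a b l m <=
  exp (- (INR m - 2 * (INR k - 1)) * gk f (INR a * s)
       - (INR l - 2 * (INR k - 1)) * gk f (INR b * s)
       + INR l * INR m * s * exp (INR k * (gk f (INR a * s) + gk f (INR b * s)))).
Proof.
  intros Hk Hf Hs Ha Hb Hx0 Hxa Hy0 Hyb.
  replace l with (Z.to_nat (x0 - x1) + (l - Z.to_nat (x0 - x1)))%nat by lia.
  replace m with (Z.to_nat (y0 - y1) + (m - Z.to_nat (y0 - y1)))%nat by lia.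
  replace x0 with (x1 + Z.of_nat (Z.to_nat (x0 - x1)))%Z at 1 by lia.
  replace y0 with (y1 + Z.of_nat (Z.to_nat (y0 - y1)))%Z at 1 by lia.
  now apply probD_le_split.
Qed.
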